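(* Let $V$ be a complex vector space of finite dimension $N$. Let $F\in \mathrm{End}(V\otimes V)$ be an involutive symmetry and let $R=R(q)\in \mathrm{End}(V\otimes V)$ be a family of Hecke symmetries depending analytically on $q$ in a neighbourhood of $q=1$, such that $R(1)=F$ and, for each $q$, the braidings $R(q)$ and $F$ are compatible. Put $q=e^h$ and expand $$\mathcal{R}(q):=R(q)\,F = I+h\,r+O(h^2),\qquad r\in \mathrm{End}(V\otimes V).$$ Then (1) $r_{\overline{12}}+r_{\overline{21}}=2F$; (2) $[r_{\overline{12}}, r_{\overline{13}}]+[r_{\overline{12}}, r_{\overline{23}}]+[r_{\overline{13}}, r_{\overline{23}}]=0$ in $\mathrm{End}(V^{\otimes 3})$.
   Context: A braiding is an invertible $R\in\mathrm{End}(V\otimes V)$ with $(R\otimes I)(I\otimes R)(R\otimes I)=(I\otimes R)(R\otimes I)(I\otimes R)$. It is an involutive symmetry if $R^2=I$ and a Hecke symmetry if $(R-qI)(R+q^{-1}I)=0$ with $q\neq\pm1$. For $X\in\mathrm{End}(V\otimes V)$, $X_{12}=X\otimes I$, $X_{23}=I\otimes X$ in $\mathrm{End}(V^{\otimes 3})$. Two braidings $R,F$ are compatible if $R_{12}F_{23}F_{12}=F_{23}F_{12}R_{23}$ and $R_{23}F_{12}F_{23}=F_{12}F_{23}R_{12}$. Overlined indices (transfer by $F$): for $X\in\mathrm{End}(V\otimes V)$, $X_{\overline{12}}=X_{12}$, $X_{\overline{13}}=F_{23}X_{12}F_{23}^{-1}$, $X_{\overline{23}}=F_{12}F_{23}X_{12}F_{23}^{-1}F_{12}^{-1}$,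 and (since $F$ is involutive) $X_{\overline{21}}=F\,X\,F$ (acting on $V\otimes V$). $[A,B]=AB-BA$. *)

(* complex numbers are R[i] (real_closed.complex) over an
   abstract R : realType (MathComp-Analysis); End(V (x) V) for V = C^N is the
   type of (N*N)x(N*N) matrices, the tensor product is mxtens' Kronecker
   product [*t] (index (i,j) |-> i*n + j, first factor major). *)
From HB Require Import structures.
From mathcomp Require Import all_boot all_order all_algebra.
From mathcomp Require Import complex mxtens.
From mathcomp Require Import reals sequences exp trigo.
Set Implicit Arguments.
Unset Strict Implicit.
Unset Printing Implicit Defensive.
Import Order.TTheory GRing.Theory Num.Theory.
Local Open Scope ring_scope.

Section Defs.
Variable R : realType.
Local Notation C := R[i].
Variable N : nat.

Notation End2 := 'M[C]_(N * N).
Notation End3 := 'M[C]_(N * N * N).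

Definition leg12 (X : End2) : End3 := X *t (1%:M : 'M[C]_N).
(* X_23 = I (x) X, transported along the associativity N*(N*N) = (N*N)*N of
   index sets (the transport preserves the numerical index i*N*N + j*N + k) *)
Definition leg23 (X : End2) : End3 :=
  castmx (mulnA N N N, mulnA N N N) ((1%:M : 'M[C]_N) *t X).

Definition braiding (X : End2) : Prop :=
  X \in unitmx /\
  leg12 X *m leg23 X *m leg12 X = leg23 X *m leg12 X *m leg23 X.

Definition involutive_symmetry (X : End2) : Prop :=
  braiding X /\ X *m X = 1%:M.

Definition hecke_symmetry (q : C) (X : End2) : Prop :=
  braiding X /\ q != 1 /\ q != -1 /\
  (X - q%:M) *m (X + q^-1%:M) = 0.

Definition compatible (X Y : End2) : Prop :=
  leg12 X *m leg23 Y *m leg12 Y = leg23 Y *m leg12 Y *m leg23 X /\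
  leg23 X *m leg12 Y *m leg23 Y = leg12 Y *m leg23 Y *m leg12 X.

Definition ov12 (F X : End2) : End3 := leg12 X.
Definition ov13 (F X : End2) : End3 :=
  leg23 F *m leg12 X *m invmx (leg23 F).
Definition ov23 (F X : End2) : End3 :=
  leg12 F *m leg23 F *m leg12 X *m invmx (leg23 F) *m invmx (leg12 F).
Definition ov21 (F X : End2) : End2 := F *m X *m F.

End Defs.

Definition commmx (n : nat) (R : pzRingType) (A B : 'M[R]_n) : 'M[R]_n :=
  A *m B - B *m A.

Definition expC (R : realType) (z : R[i]) : R[i] :=
  Complex (expR (complex.Re z) * cos (complex.Im z))
          (expR (complex.Re z) * sin (complex.Im z)).

Definition analytic_on_disc (R : realType) (n : nat)
    (f : R[i] -> 'M[R[i]]_n) (a rho : R[i]) : Prop :=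
  exists c : nat -> 'M[R[i]]_n,
    forall z : R[i], `|z - a| < rho -> forall i j : 'I_n,
      forall e : R[i], 0 < e -> exists M : nat, forall m : nat, (M <= m)%N ->
        `| \sum_(k < m) c k i j * (z - a) ^+ k - f z i j | < e.

Definition bigO_h2 (R : realType) (n : nat) (g : R[i] -> 'M[R[i]]_n) : Prop :=
  exists K delta : R[i], 0 < delta /\
    forall h : R[i], `|h| < delta -> forall i j : 'I_n,
      `|g h i j| <= K * `|h| ^+ 2.

(* Take h = t real and positive, so q = e^t, and write R(q)F = 1 + x(t) with
   x(t) = t r + O(t^2).  The Hecke relation becomes
   F x + x F + x F x = (q - q^-1)(1 + x), and since q - q^-1 = 2t + O(t^2) the
   coefficient of t gives F r + r F = 2, which is (1) after multiplying by F.
   Compatibility of R(q) with F makes the overlined legs of R(q)F satisfy the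
   Yang-Baxter equation; writing them as 1 + x_12, 1 + x_13, 1 + x_23 it reads
   [x_12,x_13] + [x_12,x_23] + [x_13,x_23] = (cubic terms) = O(t^3), and the
   coefficient of t^2 is the classical Yang-Baxter equation (2).  Coefficients are
   compared with an elementary O(t^k) calculus for the entrywise l1-norm of matrices. *)

From HB Require Import structures.
From mathcomp Require Import all_boot all_order all_algebra.
From mathcomp Require Import complex mxtens.
From mathcomp Require Import reals sequences exp trigo.
From mathcomp Require Import ring lra.
Import Order.TTheory GRing.Theory Num.Theory.
Local Open Scope ring_scope.
Set Implicit Arguments.
Unset Strict Implicit.
Unset Printing Implicit Defensive.

Section EntrywiseNorm.
Variable R : realType.
Local Notation C := R[i].
Local Notation normc := (@Normc.normc R).

Lemma normc_ge0 (z : C) : 0 <= normc z.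
Proof. by case: z => a b; rewrite /Normc.normc sqrtr_ge0. Qed.

Lemma normc_sum (I : finType) (f : I -> C) : normc (\sum_k f k) <= \sum_k normc (f k).
Proof.
elim/big_ind2: _ => [|a b c d le_ab le_cd|k _]; first by rewrite Normc.normc0.
  exact: le_trans (le_normcD _ _) (lerD le_ab le_cd).
exact: lexx.
Qed.

Definition mxnorm m n (A : 'M[C]_(m, n)) : R := \sum_i \sum_j normc (A i j).

Lemma mxnorm_ge0 m n (A : 'M[C]_(m, n)) : 0 <= mxnorm A.
Proof. by apply: sumr_ge0 => i _; apply: sumr_ge0 => j _; apply: normc_ge0. Qed.

Lemma mxnormD m n (A B : 'M[C]_(m, n)) : mxnorm (A + B) <= mxnorm A + mxnorm B.
Proof.
rewrite /mxnorm -big_split; apply: ler_sum => i _.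
rewrite -big_split; apply: ler_sum => j _; rewrite mxE; exact: le_normcD.
Qed.

Lemma mxnormN m n (A : 'M[C]_(m, n)) : mxnorm (- A) = mxnorm A.
Proof. by apply: eq_bigr => i _; apply: eq_bigr => j _; rewrite mxE normcN. Qed.

Lemma mxnormZ m n c (A : 'M[C]_(m, n)) : mxnorm (c *: A) = normc c * mxnorm A.
Proof.
rewrite /mxnorm mulr_sumr; apply: eq_bigr => i _; rewrite mulr_sumr.
by apply: eq_bigr => j _; rewrite mxE Normc.normcM.
Qed.

Lemma mxnormM m n p (A : 'M[C]_(m, n)) (B : 'M[C]_(n, p)) :
  mxnorm (A *m B) <= mxnorm A * mxnorm B.
Proof.
rewrite /mxnorm mulr_suml; apply: ler_sum => i _.
apply: (@le_trans _ _ (\sum_j \sum_k normc (A i k) * normc (B k j))).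
  apply: ler_sum => j _; rewrite mxE; apply: le_trans (normc_sum _) _.
  by apply: ler_sum => k _; rewrite Normc.normcM.
rewrite exchange_big mulr_suml; apply: ler_sum => k _.
rewrite -mulr_sumr; apply: ler_wpM2l; first exact: normc_ge0.
rewrite (bigD1 k) //= lerDl.
by apply: sumr_ge0 => l _; apply: sumr_ge0 => j _; apply: normc_ge0.
Qed.

Lemma normc_le_mxnorm m n (A : 'M[C]_(m, n)) i j : normc (A i j) <= mxnorm A.
Proof.
rewrite /mxnorm (bigD1 i) //= (bigD1 j) //= -addrA lerDl.
apply: addr_ge0; first by apply: sumr_ge0 => k _; apply: normc_ge0.
by apply: sumr_ge0 => k _; apply: sumr_ge0 => l _; apply: normc_ge0.
Qed.

Lemma mxnorm_le_entrywise m n (A : 'M[C]_(m, n)) c :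
  (forall i j, normc (A i j) <= c) -> mxnorm A <= (m * n)%:R * c.
Proof.
move=> le_Ac; apply: (@le_trans _ _ (\sum_(i < m) \sum_(j < n) c)).
  by apply: ler_sum => i _; apply: ler_sum => j _.
by rewrite !sumr_const !card_ord -mulrnA mulr_natl mulnC.
Qed.

Lemma mxnorm_eq0 m n (A : 'M[C]_(m, n)) : mxnorm A = 0 -> A = 0.
Proof.
move=> A0; apply/matrixP => i j; rewrite mxE; apply: Normc.eq0_normc.
by apply/eqP; rewrite eq_le normc_ge0 andbT -A0 normc_le_mxnorm.
Qed.

Lemma normc_real (a : R) : normc (a%:C)%C = `|a|.
Proof. by rewrite /Normc.normc /= expr0n /= addr0 sqrtr_sqr. Qed.

End EntrywiseNorm.

Section BigO.
Variable R : realType.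

Definition bigO0 (k : nat) (s : R -> R) : Prop :=
  exists M d : R, 0 < d /\ forall t, 0 < t -> t < d -> s t <= M * t ^+ k.

Lemma bigO0_le k (s s' : R -> R) d :
  0 < d -> (forall t, 0 < t -> t < d -> s t <= s' t) -> bigO0 k s' -> bigO0 k s.
Proof.
move=> d_gt0 le_ss' [M [d' [d'_gt0 Os']]]; exists M, (Num.min d d').
split=> [|t t_gt0]; first by rewrite lt_min d_gt0.
by rewrite lt_min => /andP[td td']; apply: le_trans (le_ss' _ _ td) (Os' _ _ td').
Qed.

Lemma bigO0D k (s1 s2 : R -> R) :
  bigO0 k s1 -> bigO0 k s2 -> bigO0 k (fun t => s1 t + s2 t).
Proof.
move=> [M1 [d1 [d1_gt0 O1]]] [M2 [d2 [d2_gt0 O2]]]; exists (M1 + M2), (Num.min d1 d2).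
split=> [|t t_gt0]; first by rewrite lt_min d1_gt0.
by rewrite lt_min mulrDl => /andP[td1 td2]; apply: lerD; [apply: O1|apply: O2].
Qed.

Lemma bigO0M k l (s1 s2 : R -> R) :
  (forall t, 0 <= s1 t) -> (forall t, 0 <= s2 t) ->
  bigO0 k s1 -> bigO0 l s2 -> bigO0 (k + l) (fun t => s1 t * s2 t).
Proof.
move=> s1_ge0 s2_ge0 [M1 [d1 [d1_gt0 O1]]] [M2 [d2 [d2_gt0 O2]]].
exists (M1 * M2), (Num.min d1 d2); split=> [|t t_gt0]; first by rewrite lt_min d1_gt0.
rewrite lt_min => /andP[td1 td2]; rewrite exprD mulrACA.
exact: ler_pM (s1_ge0 t) (s2_ge0 t) (O1 _ t_gt0 td1) (O2 _ t_gt0 td2).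
Qed.

Lemma bigO0_weaken k l (s : R -> R) : (k <= l)%N -> bigO0 l s -> bigO0 k s.
Proof.
move=> le_kl [M [d [d_gt0 Os]]]; exists `|M|, (Num.min d 1).
split=> [|t t_gt0]; first by rewrite lt_min d_gt0 ltr01.
rewrite lt_min => /andP[td t1]; apply: le_trans (Os _ t_gt0 td) _.
apply: le_trans (ler_wpM2r (exprn_ge0 _ (ltW t_gt0)) (ler_norm M)) _.
by apply: ler_wpM2l => //; apply: ler_wiXn2l => //; exact: ltW.
Qed.

Lemma bigO0_cst c : bigO0 0 (fun _ => c).
Proof. by exists c, 1; split=> // t _ _; rewrite expr0 mulr1. Qed.

Lemma bigO0_id : bigO0 1 (fun t => t).
Proof. by exists 1, 1; split=> // t _ _; rewrite expr1 mul1r. Qed.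

Lemma bigO0_leading_eq0 k c : 0 <= c -> bigO0 k.+1 (fun t => t ^+ k * c) -> c = 0.
Proof.
move=> c_ge0 [M [d [d_gt0 Oc]]]; apply/eqP; rewrite eq_le c_ge0 andbT leNgt.
apply/negP => c_gt0.
pose t := Num.min (d / 2) (c / (2 * (`|M| + 1))).
have M_le := ler_norm M; have M_ge0 := normr_ge0 M.
have t_gt0 : 0 < t by rewrite lt_min !divr_gt0 //; lra.
have td : t < d by rewrite /t gt_min; apply/orP; left; lra.
have tc : t * (2 * (`|M| + 1)) <= c.
  by rewrite -ler_pdivlMr ?ge_min ?lexx ?orbT //; lra.
have := Oc _ t_gt0 td; rewrite exprSr mulrCA ler_pM2l ?exprn_gt0 // => cMt.
have : M * t <= `|M| * t by apply: ler_wpM2r => //; exact: ltW.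
nra.
Qed.

End BigO.

Section MatrixBigO.
Variable R : realType.
Local Notation C := R[i].
Local Notation normc := (@Normc.normc R).
Variables m n : nat.
Implicit Types A B : R -> 'M[C]_(m, n).

Definition mxO k A := bigO0 k (fun t => mxnorm (A t)).

Lemma mxO_near k A B d :
  0 < d -> (forall t, 0 < t -> t < d -> A t = B t) -> mxO k B -> mxO k A.
Proof. by move=> d_gt0 eqAB; apply: bigO0_le d_gt0 _ => t t0 td; rewrite eqAB. Qed.

Lemma mxOD k A B : mxO k A -> mxO k B -> mxO k (fun t => A t + B t).
Proof.
by move=> OA OB; apply: bigO0_le ltr01 _ (bigO0D OA OB) => t _ _; apply: mxnormD.
Qed.

Lemma mxON k A : mxO k A -> mxO k (fun t => - A t).
Proof. by apply: bigO0_le ltr01 _ => t _ _; rewrite mxnormN. Qed.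

Lemma mxOB k A B : mxO k A -> mxO k B -> mxO k (fun t => A t - B t).
Proof. by move=> OA /mxON; apply: mxOD. Qed.

Lemma mxOZ k l (c : R -> C) A :
  bigO0 l (fun t => normc (c t)) -> mxO k A -> mxO (l + k) (fun t => c t *: A t).
Proof.
move=> Oc OA; apply: bigO0_le ltr01 _ (bigO0M _ _ Oc OA) => [t _ _|t|t].
- by rewrite mxnormZ.
- exact: normc_ge0.
- exact: mxnorm_ge0.
Qed.

Lemma mxO_cst (A : 'M[C]_(m, n)) : mxO 0 (fun _ => A).
Proof. exact: bigO0_cst. Qed.

Lemma mxO_weaken k l A : (k <= l)%N -> mxO l A -> mxO k A.
Proof. exact: bigO0_weaken. Qed.

End MatrixBigO.

Lemma mxOM (R : realType) m n p k l
    (A : R -> 'M[R[i]]_(m, n)) (B : R -> 'M[R[i]]_(n, p)) :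
  mxO k A -> mxO l B -> mxO (k + l) (fun t => A t *m B t).
Proof.
move=> OA OB; apply: bigO0_le ltr01 _ (bigO0M _ _ OA OB) => [t _ _|t|t].
- exact: mxnormM.
- exact: mxnorm_ge0.
- exact: mxnorm_ge0.
Qed.

Lemma mxO_scale (R : realType) m n k (A : R -> 'M[R[i]]_(m, n)) :
  mxO k A -> mxO k.+1 (fun t => (t%:C)%C *: A t).
Proof.
apply: (mxOZ (l := 1)); apply: bigO0_le ltr01 _ (@bigO0_id R) => t t_gt0 _.
by rewrite normc_real gtr0_norm.
Qed.

Lemma mxO_comm (R : realType) n k l (A B : R -> 'M[R[i]]_n) :
  mxO k A -> mxO l B -> mxO (k + l) (fun t => commmx (A t) (B t)).
Proof. by move=> OA OB; apply: mxOB (mxOM OA OB) _; rewrite addnC; apply: mxOM. Qed.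

Lemma mxO_leading_eq0 (R : realType) m n k (y : R -> 'M[R[i]]_(m, n)) c :
  mxO k.+1 y -> mxO k.+1 (fun t => y t - (t%:C)%C ^+ k *: c) -> c = 0.
Proof.
move=> Oy Oyc; apply: mxnorm_eq0; apply: (bigO0_leading_eq0 (k := k)).
  exact: mxnorm_ge0.
apply: bigO0_le ltr01 _ (mxOB Oy Oyc) => t t_gt0 _.
rewrite opprB addrC subrK mxnormZ -rmorphXn normc_real.
by rewrite gtr0_norm ?exprn_gt0.
Qed.

Lemma addr3ACA (V : nmodType) (a a' b b' c c' : V) :
  (a + a') + (b + b') + (c + c') = (a + b + c) + (a' + b' + c').
Proof. by rewrite [(a + a') + _]addrACA [LHS]addrACA. Qed.

Lemma addr3_subZ (K : pzRingType) (V : lmodType K) (h : K) (A B D a b d : V) :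
  A + B + D - h *: (a + b + d) = (A - h *: a) + (B - h *: b) + (D - h *: d).
Proof. by rewrite [RHS]addr3ACA !scalerDr !opprD. Qed.

Section Commutators.
Variables (K : comPzRingType) (n : nat).
Implicit Types A B D x y z : 'M[K]_n.

Lemma commmxDl A B D : commmx (A + B) D = commmx A D + commmx B D.
Proof. by rewrite /commmx mulmxDl mulmxDr opprD addrACA. Qed.

Lemma commmxDr A B D : commmx D (A + B) = commmx D A + commmx D B.
Proof. by rewrite /commmx mulmxDl mulmxDr opprD addrACA. Qed.

Lemma commmxZ (k l : K) A B : commmx (k *: A) (l *: B) = (k * l) *: commmx A B.
Proof. by rewrite /commmx -!scalemxAl -!scalemxAr !scalerA scalerBr [l * k]mulrC. Qed.

Lemma commmx_expansion (h : K) A B GA GB :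
  commmx (h *: A + GA) (h *: B + GB) =
  (h ^+ 2) *: commmx A B + (commmx GA (h *: B + GB) + commmx (h *: A) GB).
Proof.
by rewrite commmxDl commmxDr commmxZ expr2 -addrA [commmx (h *: A) GB + _]addrC.
Qed.

Definition cYB x y z := commmx x y + commmx x z + commmx y z.

Lemma commmx_1D x y : commmx (1%:M + x) (1%:M + y) = commmx x y.
Proof.
rewrite /commmx !mulmxDl !mulmxDr !mul1mx !mulmx1.
by rewrite [1%:M + y + _]addrACA [(1%:M + x) + _]addrC addrKA [y + _]addrC addrKA.
Qed.

Lemma mulmx3_sub_rev x y z :
  x *m y *m z - z *m y *m x = commmx x y *m z + y *m commmx x z + commmx y z *m x.
Proof. by rewrite /commmx mulmxBl mulmxBr mulmxBl !mulmxA !subrKA. Qed.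

Lemma cYB_of_YBE x y z :
  (1%:M + x) *m (1%:M + y) *m (1%:M + z) = (1%:M + z) *m (1%:M + y) *m (1%:M + x) ->
  cYB x y z = - (commmx x y *m z + y *m commmx x z + commmx y z *m x).
Proof.
move=> /eqP; rewrite -subr_eq0 mulmx3_sub_rev !commmx_1D.
rewrite /cYB; move: (commmx x y) (commmx x z) (commmx y z) => cxy cxz cyz.
rewrite [cxy *m _]mulmxDr [cyz *m _]mulmxDr [_ *m cxz]mulmxDl !(mulmx1, mul1mx).
by rewrite addr3ACA addr_eq0 => /eqP.
Qed.

End Commutators.

Lemma hecke_expansion (K : fieldType) n (F X x : 'M[K]_n) (q : K) :
  q != 0 -> F *m F = 1%:M -> X *m F = 1%:M + x ->
  (X - q%:M) *m (X + q^-1%:M) = 0 ->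
  F *m x + x *m F + x *m F *m x = (q - q^-1) *: (1%:M + x).
Proof.
move=> q0 FF XF hecke.
have XE : X = (1%:M + x) *m F by rewrite -XF -mulmxA FF mulmx1.
have XX : X *m X = (q - q^-1) *: X + 1%:M.
  move: hecke; rewrite mulmxBl !mulmxDr mul_mx_scalar !mul_scalar_mx.
  rewrite scale_scalar_mx mulfV // => /subr0_eq hecke.
  by rewrite scalerBl addrAC -hecke addrK.
have : (1%:M + x) *m F *m (1%:M + x) = (q - q^-1) *: (1%:M + x) + F.
  by rewrite -{1}XE -XF mulmxA XX mulmxDl mul1mx -scalemxAl XF.
rewrite mulmxDl mul1mx !mulmxDr !mulmx1 -addrA [in RHS]addrC mulmxDl => /addrI <-.
by rewrite addrA [x *m F + _]addrC.
Qed.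

(* With a = X_12, b = X_23, f = F_12, g = F_23 the hypotheses are the braid relations
   and the compatibility of X with F, and the conclusion is the Yang-Baxter equation
   for the overlined legs of XF. *)
Lemma transfer_braid (T : pzRingType) (a b f g : T) :
  f * f = 1 -> g * g = 1 -> f * g * f = g * f * g ->
  a * b * a = b * a * b -> a * g * f = g * f * b -> b * f * g = f * g * a ->
  (a * f) * (g * (a * f) * g) * (f * g * (a * f) * (g * f)) =
  (f * g * (a * f) * (g * f)) * (g * (a * f) * g) * (a * f).
Proof.
move=> ff gg fgf aba agf bfg.
have {}ff x : f * (f * x) = x by rewrite mulrA ff mul1r.
have {}gg x : g * (g * x) = x by rewrite mulrA gg mul1r.
have {}fgf x : f * (g * (f * x)) = g * (f * (g * x)) by rewrite !mulrA fgf.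
have {}aba x : a * (b * (a * x)) = b * (a * (b * x)) by rewrite !mulrA aba.
have {}agf x : a * (g * (f * x)) = g * (f * (b * x)) by rewrite !mulrA agf.
have {}bfg x : b * (f * (g * x)) = f * (g * (a * x)) by rewrite !mulrA bfg.
rewrite -[LHS]mulr1 -[RHS]mulr1 -!mulrA.
have -> : a * (f * (g * (a * (f * (g * (f * (g * (a * (f * (g * (f * 1))))))))))) =
          b * (a * (f * (g * (a * (f * 1))))).
  by rewrite fgf gg agf gg ff aba bfg.
by rewrite fgf gg agf gg ff.
Qed.

Section FirstOrder.
Variable R : realType.
Local Notation C := R[i].
Local Notation normc := (@Normc.normc R).

Definition expand1 m n (a : 'M[C]_(m, n)) (G : R -> 'M[C]_(m, n)) (t : R) :=
  t%:C%C *: a + G t.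

Lemma mxO_expand1 m n (a : 'M[C]_(m, n)) G : mxO 2 G -> mxO 1 (expand1 a G).
Proof. by move=> OG; apply: mxOD (mxO_scale (mxO_cst a)) (mxO_weaken _ OG). Qed.

Lemma mxO_commmx_expand1 n (a b : 'M[C]_n) Ga Gb : mxO 2 Ga -> mxO 2 Gb ->
  mxO 3 (fun t => commmx (expand1 a Ga t) (expand1 b Gb t) - t%:C%C ^+ 2 *: commmx a b).
Proof.
move=> OGa OGb; have Oa := mxO_scale (mxO_cst a).
apply: mxO_near ltr01 _ (mxOD (mxO_comm OGa (mxO_expand1 b OGb)) (mxO_comm Oa OGb)).
by move=> t _ _; rewrite /expand1 commmx_expansion addrC addKr.
Qed.

Lemma cYB_eq0_of_YBE_expand1 n (a b c : 'M[C]_n) Ga Gb Gc d :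
  mxO 2 Ga -> mxO 2 Gb -> mxO 2 Gc -> 0 < d ->
  (forall t, 0 < t -> t < d ->
     (1%:M + expand1 a Ga t) *m (1%:M + expand1 b Gb t) *m (1%:M + expand1 c Gc t) =
     (1%:M + expand1 c Gc t) *m (1%:M + expand1 b Gb t) *m (1%:M + expand1 a Ga t)) ->
  cYB a b c = 0.
Proof.
move=> OGa OGb OGc d_gt0 YBE.
have Oa := mxO_expand1 a OGa; have Ob := mxO_expand1 b OGb.
have Oc := mxO_expand1 c OGc.
apply: (mxO_leading_eq0 (k := 2)
  (y := fun t => cYB (expand1 a Ga t) (expand1 b Gb t) (expand1 c Gc t))).
  apply: mxO_near d_gt0 (fun t t0 td => cYB_of_YBE (YBE t t0 td)) _.
  apply/mxON/mxOD; first apply: mxOD.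
  - exact: mxOM (mxO_comm Oa Ob) Oc.
  - exact: mxOM Ob (mxO_comm Oa Oc).
  - exact: mxOM (mxO_comm Ob Oc) Oa.
have Oab := mxO_commmx_expand1 a b OGa OGb.
have Oac := mxO_commmx_expand1 a c OGa OGc.
have Obc := mxO_commmx_expand1 b c OGb OGc.
apply: mxO_near ltr01 _ (mxOD (mxOD Oab Oac) Obc) => t _ _.
exact: addr3_subZ.
Qed.

Lemma bigO0_normc_sub_2t (d : R -> C) :
  bigO0 2 (fun t => normc (d t - 2 * t%:C%C)) -> bigO0 1 (fun t => normc (d t)).
Proof.
move=> Od2; have O2t : bigO0 1 (fun t : R => 2 * t).
  by exists 2, 1; split=> // t _ _; rewrite expr1.
have := bigO0D (bigO0_weaken (k := 1) (l := 2) isT Od2) O2t.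
apply: bigO0_le ltr01 _ => t t_gt0 _.
have -> : 2 * t = normc (2 * t%:C%C).
  by rewrite -[2 in RHS](rmorph_nat (real_complex R)) -rmorphM normc_real gtr0_norm ?mulr_gt0.
by rewrite -[X in normc X](subrK (2 * t%:C%C)) le_normcD.
Qed.

Lemma anticommutator_of_hecke_expand1 n (F r : 'M[C]_n) G (d : R -> C) delta :
  mxO 2 G -> bigO0 2 (fun t => normc (d t - 2 * t%:C%C)) -> 0 < delta ->
  (forall t, 0 < t -> t < delta ->
     let x := expand1 r G t in F *m x + x *m F + x *m F *m x = d t *: (1%:M + x)) ->
  F *m r + r *m F = 2%:M.
Proof.
move=> OG Od2 delta_gt0 hecke; apply/eqP; rewrite -subr_eq0; apply/eqP.
have Ox := mxO_expand1 r OG.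
have Od := bigO0_normc_sub_2t Od2.
apply: (mxO_leading_eq0 (k := 1)
  (y := fun t => F *m expand1 r G t + expand1 r G t *m F - d t *: 1%:M)).
  apply: mxO_near delta_gt0 _ (mxOB (mxOZ Od Ox) (mxOM (mxOM Ox (mxO_cst F)) Ox)).
  move=> t t0 td; move: (hecke t t0 td) => /= /eqP.
  by rewrite scalerDr -subr_eq => /eqP <-; rewrite opprB addrCA opprD addNKr.
apply: mxO_near ltr01 _ (mxOB (mxOD (mxOM (mxO_cst F) OG) (mxOM OG (mxO_cst F)))
                               (mxOZ Od2 (mxO_cst 1%:M))) => t _ _.
rewrite /expand1 expr1 mulmxDr mulmxDl -scalemxAr -scalemxAl addrACA -scalerDr.
rewrite scalerBr scalerBl [(2 * _) *: _]scale_scalar_mx [_ *: 2%:M]scale_scalar_mx.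
rewrite mulr1 mulrC.
move: (t%:C%C *: _) (F *m G t + _) (d t *: _) (2 * t%:C%C)%:M => a b c e.
by rewrite [a + b]addrC addrAC addrKA opprK opprB addrA.
Qed.

End FirstOrder.

Section Legs.
Variable R : realType.
Local Notation C := R[i].
Variable N : nat.
Local Notation M2 := 'M[C]_(N * N).
Local Notation M3 := 'M[C]_(N * N * N).

Fact leg12_is_semilinear : semilinear (@leg12 R N).
Proof. by split=> [a X|X Y]; apply/matrixP=> i j; rewrite !mxE (mulrA, mulrDl). Qed.
HB.instance Definition _ :=
  GRing.isSemilinear.Build C M2 M3 _ (@leg12 R N) leg12_is_semilinear.

Lemma tensmx11 m n : (1%:M : 'M[C]_m) *t (1%:M : 'M[C]_n) = 1%:M.
Proof.
apply/matrixP => i j.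
case: (mxtens_indexP i) => i0 i1; case: (mxtens_indexP j) => j0 j1.
rewrite tensmxE !mxE (inj_eq (can_inj (@mxtens_indexK m n))) xpair_eqE.
by case: (i0 == j0); case: (i1 == j1); rewrite ?mulr1 ?mulr0 ?mul0r.
Qed.

Lemma leg12_1 : leg12 (1%:M : M2) = 1%:M.
Proof. exact: tensmx11. Qed.

Lemma leg23_1 : leg23 (1%:M : M2) = 1%:M.
Proof. by rewrite /leg23 tensmx11; case: _ / mulnA. Qed.

Lemma leg12M (X Y : M2) : leg12 (X *m Y) = leg12 X *m leg12 Y.
Proof. by rewrite /leg12 tensmx_mul mulmx1. Qed.

Lemma leg23M (X Y : M2) : leg23 (X *m Y) = leg23 X *m leg23 Y.
Proof. by rewrite /leg23; case: _ / mulnA; rewrite tensmx_mul mulmx1. Qed.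

Lemma mxnorm_leg12 (X : M2) : mxnorm (leg12 X) <= (N * N * N * (N * N * N))%:R * mxnorm X.
Proof.
apply: mxnorm_le_entrywise => i j; rewrite mxE Normc.normcM.
apply: le_trans (ler_piMr (normc_ge0 _) _) (normc_le_mxnorm X _ _).
by rewrite mxE; case: (_ == _); rewrite ?Normc.normc1 ?Normc.normc0.
Qed.

Definition conj12 (P Q : M3) (X : M2) : M3 := P *m leg12 X *m Q.

Lemma mxO_conj12 k (P Q : M3) (G : R -> M2) :
  mxO k G -> mxO k (fun t => conj12 P Q (G t)).
Proof.
move=> OG; have Ol : mxO k (fun t => leg12 (G t)).
  apply: bigO0_le ltr01 _ (bigO0M _ _ (bigO0_cst _) OG) => [t _ _|t|t] /=.
  - exact: mxnorm_leg12.
  - exact: ler0n.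
  - exact: mxnorm_ge0.
by have := mxOM (mxOM (mxO_cst P) Ol) (mxO_cst Q); rewrite addn0.
Qed.

Lemma conj12_expand1 (P Q : M3) (r : M2) (G : R -> M2) t :
  P *m Q = 1%:M ->
  conj12 P Q (1%:M + expand1 r G t) =
  1%:M + expand1 (conj12 P Q r) (fun s => conj12 P Q (G s)) t.
Proof.
move=> PQ; rewrite /conj12 /expand1 !linearD linearZ /= leg12_1.
by rewrite !(mulmxDr, mulmxDl) mulmx1 PQ -scalemxAr -scalemxAl.
Qed.

Lemma conj12_YBE_expand1 (P1 Q1 P2 Q2 P3 Q3 : M3) (r : M2) (G : R -> M2) t :
  P1 *m Q1 = 1%:M -> P2 *m Q2 = 1%:M -> P3 *m Q3 = 1%:M ->
  conj12 P1 Q1 (1%:M + expand1 r G t) *m conj12 P2 Q2 (1%:M + expand1 r G t) *m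
    conj12 P3 Q3 (1%:M + expand1 r G t) =
  conj12 P3 Q3 (1%:M + expand1 r G t) *m conj12 P2 Q2 (1%:M + expand1 r G t) *m
    conj12 P1 Q1 (1%:M + expand1 r G t) ->
  let x P Q := 1%:M + expand1 (conj12 P Q r) (fun s => conj12 P Q (G s)) t in
  x P1 Q1 *m x P2 Q2 *m x P3 Q3 = x P3 Q3 *m x P2 Q2 *m x P1 Q1.
Proof.
by move=> PQ1 PQ2 PQ3; rewrite (conj12_expand1 _ _ _ PQ1) (conj12_expand1 _ _ _ PQ2)
  (conj12_expand1 _ _ _ PQ3).
Qed.

End Legs.

Lemma invmx_involutive m (C : comUnitRingType) (A : 'M[C]_m) :
  A *m A = 1%:M -> invmx A = A.
Proof.
move=> AA; have [uA _] := mulmx1_unit AA.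
by rewrite -[invmx A]mulmx1 -AA mulmxA mulVmx ?mul1mx.
Qed.

Section Transfer.
Variables (R : realType) (N : nat).
Local Notation M2 := 'M[R[i]]_(N * N).
Variable F : M2.
Hypothesis FF : F *m F = 1%:M.

Lemma leg12_involutive : leg12 F *m leg12 F = 1%:M.
Proof. by rewrite -leg12M FF leg12_1. Qed.

Lemma leg23_involutive : leg23 F *m leg23 F = 1%:M.
Proof. by rewrite -leg23M FF leg23_1. Qed.

Lemma leg12_leg23_inverse : (leg12 F *m leg23 F) *m (leg23 F *m leg12 F) = 1%:M.
Proof.
rewrite mulmxA -[_ *m leg23 F *m leg23 F]mulmxA leg23_involutive.
by rewrite mulmx1 leg12_involutive.
Qed.

Lemma ov12E X : ov12 F X = conj12 1%:M 1%:M X.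
Proof. by rewrite /conj12 mul1mx mulmx1. Qed.

Lemma ov13E X : ov13 F X = conj12 (leg23 F) (leg23 F) X.
Proof. by rewrite /ov13 invmx_involutive // leg23_involutive. Qed.

Lemma ov23E X : ov23 F X = conj12 (leg12 F *m leg23 F) (leg23 F *m leg12 F) X.
Proof.
rewrite /ov23 !invmx_involutive ?leg12_involutive ?leg23_involutive //.
by rewrite /conj12 !mulmxA.
Qed.

End Transfer.

Lemma ov_YBE (R : realType) N (F X : 'M[R[i]]_(N * N)) :
  involutive_symmetry F -> braiding X -> compatible X F ->
  ov12 F (X *m F) *m ov13 F (X *m F) *m ov23 F (X *m F) =
  ov23 F (X *m F) *m ov13 F (X *m F) *m ov12 F (X *m F).
Proof.
move=> [[_ braidF] FF] [_ braidX] [compat1 compat2].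
rewrite ov12E (ov13E FF) (ov23E FF) /conj12 mul1mx mulmx1 leg12M.
rewrite mulmxE; apply: (transfer_braid (b := leg23 X)) => //.
- exact: leg12_involutive.
- exact: leg23_involutive.
Qed.

Section RealExponential.
Variable R : realType.
Local Notation C := R[i].
Local Notation normc := (@Normc.normc R).

Lemma expRN_mul1Dx_le1 (x : R) : expR (- x) * (1 + x) <= 1.
Proof.
rewrite -[X in _ <= X](mulVf (lt0r_neq0 (expR_gt0 x))) -expRN.
by apply: ler_wpM2l; [exact: ltW (expR_gt0 _) | exact: expR_ge1Dx].
Qed.

Lemma expR_sub_expRN_near0 (t : R) : 0 < t -> t <= 1 / 2 ->
  expR t - 1 <= 2 * t /\ `|expR t - expR (- t) - 2 * t| <= 2 * t ^+ 2.
Proof.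
move=> t_gt0 t_le.
have eL := expR_ge1Dx t; have fL := expR_ge1Dx (- t).
have eU := expRN_mul1Dx_le1 (- t); rewrite opprK in eU.
have fU := expRN_mul1Dx_le1 t.
have e0 := expR_gt0 t; have f0 := expR_gt0 (- t).
have eU' : expR t <= 1 + t + 2 * t ^+ 2 by nra.
have fU' : expR (- t) <= 1 - t + t ^+ 2 by nra.
split; first nra.
rewrite ler_norml; apply/andP; split; nra.
Qed.

Lemma expC_real (t : R) : expC (t%:C)%C = (expR t)%:C%C.
Proof. by rewrite /expC /= cos0 sin0 mulr1 mulr0. Qed.

Lemma expC_real_neq (t : R) : 0 < t ->
  [/\ expC (t%:C)%C != 0, expC (t%:C)%C != 1 & expC (t%:C)%C != -1].
Proof.
move=> t_gt0; have e1 : 1 < expR t by rewrite expR_gt1.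
by rewrite expC_real; split; apply/eqP => /(congr1 (@complex.Re R)) /=; lra.
Qed.

Lemma expC_near1 (rho : C) : 0 < rho ->
  exists2 t1 : R, 0 < t1 & forall t, 0 < t -> t < t1 -> `|expC (t%:C)%C - 1| < rho.
Proof.
case: rho => a b; rewrite ltcE /= => /andP[/eqP -> a_gt0].
exists (Num.min (1 / 2) (a / 2)); first by rewrite lt_min; apply/andP; split; lra.
move=> t t_gt0; rewrite lt_min => /andP[t12 ta].
have [e_le _] := expR_sub_expRN_near0 t_gt0 (ltW t12).
rewrite expC_real -(rmorph1 (real_complex R)) -rmorphB normc_def /= expr0n addr0.
rewrite complexr0 ltcR sqrtr_sqr ger0_norm; first lra.
by have := expR_ge1Dx t; lra.
Qed.

Lemma bigO0_expC_sinh :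
  bigO0 2 (fun t : R => normc (expC (t%:C)%C - (expC (t%:C)%C)^-1 - 2 * (t%:C)%C)).
Proof.
exists 2, (1 / 2); split=> [|t t_gt0 t12]; first lra.
have [_ sinh_le] := expR_sub_expRN_near0 t_gt0 (ltW t12).
rewrite expC_real -fmorphV -expRN -(rmorph_nat (real_complex R)) -rmorphM -!rmorphB.
by rewrite normc_real.
Qed.

End RealExponential.

Lemma mxO_of_bigO_h2 (R : realType) n (g : R[i] -> 'M[R[i]]_n) :
  bigO_h2 g -> mxO 2 (fun t : R => g (t%:C)%C).
Proof.
case=> K [[d1 d2] [d_gt0 Og]]; move: d_gt0; rewrite ltcE /= => /andP[/eqP d2_0 d1_gt0].
subst d2.
exists ((n * n)%:R * complex.Re K), d1; split=> // t t_gt0 td.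
rewrite -mulrA; apply: mxnorm_le_entrywise => i j.
have := Og (t%:C)%C; rewrite normc_def /= expr0n addr0 sqrtr_sqr gtr0_norm //.
move=> /(_ _ i j); rewrite ltcR => /(_ td).
rewrite normc_def -rmorphXn.
have Re_le (a b : R) : (a%:C <= K * b%:C)%C -> a <= complex.Re K * b.
  by case: (K) => k1 k2; rewrite lecE /= !mulr0 subr0 => /andP[_].
by move/Re_le; rewrite /Normc.normc; case: (g _ i j).
Qed.

Theorem mainTheorem1 (R : realType) (N : nat)
    (F : 'M[R[i]]_(N * N)) (Rq : R[i] -> 'M[R[i]]_(N * N)) (rho : R[i])
    (r : 'M[R[i]]_(N * N)) :
  involutive_symmetry F ->
  0 < rho ->
  analytic_on_disc Rq 1 rho ->
  (forall q : R[i], `|q - 1| < rho -> q != 0 -> q != 1 -> q != -1 ->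
     hecke_symmetry q (Rq q)) ->
  (forall q : R[i], `|q - 1| < rho -> q != 0 -> compatible (Rq q) F) ->
  Rq 1 = F ->
  bigO_h2 (fun h : R[i] => Rq (expC h) *m F - 1%:M - h *: r) ->
  r + ov21 F r = 2%:R *: F /\
  commmx (ov12 F r) (ov13 F r) + commmx (ov12 F r) (ov23 F r)
    + commmx (ov13 F r) (ov23 F r) = 0.
Proof.
move=> invF rho_gt0 _ hecke compat _ expansion; have [_ FF] := invF.
pose q (t : R) := expC (t%:C)%C.
pose G (t : R) := Rq (q t) *m F - 1%:M - (t%:C)%C *: r.
have OG : mxO 2 G := mxO_of_bigO_h2 expansion.
have RqF t : Rq (q t) *m F = 1%:M + expand1 r G t by rewrite /expand1 /G !subrKC.
have [t1 t1_gt0 q_near1] := expC_near1 rho_gt0.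
have hecke_q t : 0 < t -> t < t1 -> hecke_symmetry (q t) (Rq (q t)).
  by move=> t_gt0 tt1; have [] := expC_real_neq t_gt0; apply: hecke; apply: q_near1.
split.
  have anti : F *m r + r *m F = 2%:M.
    apply: (anticommutator_of_hecke_expand1 OG (@bigO0_expC_sinh R) t1_gt0) => t t_gt0 tt1.
    have [q_neq0 _ _] := expC_real_neq t_gt0.
    have [_ [_ [_ hecke_eq]]] := hecke_q t t_gt0 tt1.
    exact: hecke_expansion q_neq0 FF (RqF t) hecke_eq.
  rewrite -mul_scalar_mx -anti mulmxDl -[r *m F *m F]mulmxA FF mulmx1.
  by rewrite addrC.
change (cYB (ov12 F r) (ov13 F r) (ov23 F r) = 0).
rewrite ov12E (ov13E FF) (ov23E FF).
apply: (cYB_eq0_of_YBE_expand1 (mxO_conj12 _ _ OG) (mxO_conj12 _ _ OG)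
          (mxO_conj12 _ _ OG) t1_gt0) => t t_gt0 tt1.
have [braidX _] := hecke_q t t_gt0 tt1; have [q_neq0 _ _] := expC_real_neq t_gt0.
have := ov_YBE invF braidX (compat _ (q_near1 t t_gt0 tt1) q_neq0).
rewrite ov12E (ov13E FF) (ov23E FF) RqF.
exact: (conj12_YBE_expand1 (mulmx1 _) (leg23_involutive FF) (leg12_leg23_inverse FF)).
Qed.
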